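(* Let $\mathcal U$ be an unbalanced critical update family and $\mathcal S_U$ as in the context. There is a constant $c>0$ depending only on $\mathcal U$ such that for every $A\subset\mathbb Z^2$ and every $\mathcal S_U$-droplet $D$ internally spanned by $A$, $|D\cap A|\ge c\cdot\operatorname{diam}(D)$.
   Context: Update family $\mathcal U$: finite collection of finite subsets of $\mathbb Z^2\setminus\{0\}$, $A_{t+1}=A_t\cup\{x:x+X\subset A_t,\ X\in\mathcal U\}$, $[A]=\bigcup_tA_t$. $\mathbb H_u(a)=\{x\in\mathbb Z^2:\langle x-a,u\rangle<0\}$, $\mathbb H_u=\mathbb H_u(0)$. For rational $u$, $\alpha^\pm(u)$ is the minimal $|Z|$ with $[\mathbb H_u\cup Z]$ containing infinitely many sites of $\ell_u^\pm$ (origin plus sites of $\{x:\langle x,u\rangle=0\}$ right/left of origin looking in direction $u$); $\bar\alpha(u)=\min\{\alpha^+,\alpha^-\}$; $\alpha(u)=\bar\alpha(u)$ if both finite else $\infty$; $\alpha=\alpha(\mathcal U)=\min$ over open semicircles $C$ of $\sup_{u\in C}\alpha(u)$. Unbalanced critical: $1\le\alpha<\infty$ and no closed semicircle has $\alpha(u)\le\alpha$ throughout. $\mathcal S_U=\{u^*,-u^*,u^l,u^r\}$ is fixed with $u^l,u^r$ in opposite open semicircles separated by $\pm u^*$, $\min\{\alpha(u^* ),\alpha(-u^* )\}\ge\alpha+1$, $\min\{\bar\alpha(u^l),\bar\alpha(u^r)\}=\alpha$. An $\mathcal S_U$-droplet is a non-empty set $\bigcap_{u\in\mathcal S_U}\mathbb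 H_u(a_u)$, $a_u\in\mathbb Z^2$. $\nu=\max\{\|x-y\|:x,y\in X\cup\{0\},X\in\mathcal U\}$, $\kappa=3\nu$; strongly connected means connected in the graph on $\mathbb Z^2$ joining $x,y$ with $\|x-y\|_2\le\kappa$. $D$ is internally spanned by $A$ if some strongly connected $L\subset[D\cap A]$ has $D$ as the smallest $\mathcal S_U$-droplet containing $L$. $\operatorname{diam}(K)=\max\{\|x-y\|:x,y\in K\}$. *)

From Stdlib Require Import Reals Lra Lia ZArith Arith List Classical
  ClassicalEpsilon Wf_nat.
Import ListNotations.
Open Scope R_scope.

Lemma least_exists (P : nat -> Prop) :
  (exists n, P n) -> exists n, P n /\ forall m, P m -> (n <= m)%nat.
Proof.
  intros [n Hn]. revert Hn.
  induction n as [n IH] using (well_founded_induction lt_wf). intro Hn.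
  destruct (classic (exists m, (m < n)%nat /\ P m)) as [[m [Hm Pm]]|Hno].
  - exact (IH m Hm Pm).
  - exists n; split; [exact Hn|]. intros m Pm.
    destruct (le_lt_dec n m) as [h|h]; [exact h|].
    exfalso; apply Hno; eauto.
Qed.

Definition least (P : nat -> Prop) : option nat :=
  match excluded_middle_informative (exists n, P n) with
  | left H => Some (proj1_sig (constructive_indefinite_description _ (least_exists P H)))
  | right _ => None
  end.

(* extended naturals: option nat with None = +infinity *)
Definition ole (x y : option nat) : Prop :=
  match x, y with
  | _, None => True
  | None, Some _ => False
  | Some m, Some n => (m <= n)%nat
  end.

Definition omin (x y : option nat) : option nat :=
  match x, y with
  | None, _ => y
  | _, None => x
  | Some m, Some n => Some (Nat.min m n)
  end.

Definition pt := (Z * Z)%type.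
Definition padd (x y : pt) : pt := ((fst x + fst y)%Z, (snd x + snd y)%Z).
Definition psub (x y : pt) : pt := ((fst x - fst y)%Z, (snd x - snd y)%Z).

Definition dist2 (x y : pt) : R :=
  sqrt ((IZR (fst x) - IZR (fst y))^2 + (IZR (snd x) - IZR (snd y))^2).

Definition infinite_set (S : pt -> Prop) : Prop :=
  forall l : list pt, exists x, S x /\ ~ In x l.

(* cardinality of a finite set (None if S is infinite) *)
Definition card_set (S : pt -> Prop) : option nat :=
  least (fun k => exists l : list pt, NoDup l /\ length l = k /\
                                      forall x, In x l <-> S x).

(* an update family: a finite collection of finite subsets of Z^2 \ {0} *)
Definition update_family := list (list pt).

Definition is_update_family (U : update_family) : Prop :=
  forall X, In X U -> forall x, In x X -> x <> (0%Z, 0%Z).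

Fixpoint iterA (U : update_family) (A : pt -> Prop) (t : nat) : pt -> Prop :=
  match t with
  | O => A
  | S t' => fun x => iterA U A t' x \/
              exists X, In X U /\ forall y, In y X -> iterA U A t' (padd x y)
  end.

Definition closure (U : update_family) (A : pt -> Prop) : pt -> Prop :=
  fun x => exists t, iterA U A t x.

Definition vec := (R * R)%type.
Definition unit_vec (u : vec) : Prop := (fst u)^2 + (snd u)^2 = 1.
Definition vneg (u : vec) : vec := (- fst u, - snd u).
Definition dotR (u v : vec) : R := fst u * fst v + snd u * snd v.
Definition det (u v : vec) : R := fst u * snd v - snd u * fst v.

Definition rational_dir (u : vec) : Prop :=
  unit_vec u /\ exists (p q : Z) (lam : R), (p <> 0%Z \/ q <> 0%Z) /\ 0 < lam /\
     u = (lam * IZR p, lam * IZR q).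

Definition ip (x : pt) (u : vec) : R := IZR (fst x) * fst u + IZR (snd x) * snd u.

Definition Hu (u : vec) (a : pt) : pt -> Prop := fun x => ip (psub x a) u < 0.

(* l_u^+ : origin plus sites of {<x,u> = 0} to the right of the origin looking
   in direction u (right = u rotated clockwise = (u2, -u1));
   l_u^- : origin plus sites to the left *)
Definition ell_plus (u : vec) : pt -> Prop :=
  fun x => ip x u = 0 /\ ip x (snd u, - fst u) >= 0.
Definition ell_minus (u : vec) : pt -> Prop :=
  fun x => ip x u = 0 /\ ip x (snd u, - fst u) <= 0.

Definition origin : pt := (0%Z, 0%Z).

Definition alpha_side (U : update_family) (ell : pt -> Prop) (u : vec) : option nat :=
  least (fun k => exists Z : list pt, NoDup Z /\ length Z = k /\
           infinite_set (fun x => closure U (fun y => Hu u origin y \/ In y Z) x /\ ell x)).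

Definition alpha_plus U u := alpha_side U (ell_plus u) u.
Definition alpha_minus U u := alpha_side U (ell_minus u) u.
Definition alpha_bar U u := omin (alpha_plus U u) (alpha_minus U u).
Definition alpha_dir U u : option nat :=
  match alpha_plus U u, alpha_minus U u with
  | Some _, Some _ => alpha_bar U u
  | _, _ => None
  end.

Definition semicircle_sup (U : update_family) (v : vec) : option nat :=
  least (fun k => forall u, rational_dir u -> dotR u v > 0 ->
                            ole (alpha_dir U u) (Some k)).

Definition alpha_U (U : update_family) : option nat :=
  least (fun k => exists v, unit_vec v /\ semicircle_sup U v = Some k).

Definition unbalanced_critical (U : update_family) : Prop :=
  exists a : nat, alpha_U U = Some a /\ (1 <= a)%nat /\
    ~ (exists v, unit_vec v /\
         forall u, rational_dir u -> dotR u v >= 0 -> ole (alpha_dir U u) (Some a)).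

Definition good_SU (U : update_family) (a : nat) (us ul ur : vec) : Prop :=
  rational_dir us /\ rational_dir ul /\ rational_dir ur /\
  det us ul * det us ur < 0 /\
  ole (Some (a + 1)%nat) (alpha_dir U us) /\
  ole (Some (a + 1)%nat) (alpha_dir U (vneg us)) /\
  omin (alpha_bar U ul) (alpha_bar U ur) = Some a.

Definition is_droplet (us ul ur : vec) (D : pt -> Prop) : Prop :=
  (exists a1 a2 a3 a4 : pt, forall x,
      D x <-> (Hu us a1 x /\ Hu (vneg us) a2 x /\ Hu ul a3 x /\ Hu ur a4 x)) /\
  (exists x, D x).

Definition nu (U : update_family) : R :=
  fold_right Rmax 0
    (map (fun X => fold_right Rmax 0
            (map (fun x => fold_right Rmax 0 (map (fun y => dist2 x y) (origin :: X)))
                 (origin :: X))) U).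
Definition kappa (U : update_family) : R := 3 * nu U.

Fixpoint kpath (U : update_family) (L : pt -> Prop) (x : pt) (p : list pt) (y : pt) : Prop :=
  match p with
  | [] => x = y
  | z :: p' => L z /\ dist2 x z <= kappa U /\ kpath U L z p' y
  end.
Definition strongly_connected (U : update_family) (L : pt -> Prop) : Prop :=
  forall x y, L x -> L y -> exists p, kpath U L x p y.

Definition internally_spanned (U : update_family) (us ul ur : vec)
    (A D : pt -> Prop) : Prop :=
  exists L : pt -> Prop,
    (forall x, L x -> closure U (fun y => D y /\ A y) x) /\
    strongly_connected U L /\
    is_droplet us ul ur D /\ (forall x, L x -> D x) /\
    (forall D', is_droplet us ul ur D' -> (forall x, L x -> D' x) ->
                forall x, D x -> D' x).

(* Every direction of S_U has positive difficulty, hence is stable: each update rule has a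
   site in the closed half-plane {<y,u> >= 0}, so intersections of half-planes with normals
   in S_U are closed under the bootstrap dynamics.  Since S_U lies in no closed semicircle,
   there are weights c_u > 0 with sum_u c_u u = 0; the weighted size sum_u c_u <a_u,u> of a
   droplet is then positive, bounds its diameter, and grows by at most an additive constant
   when two droplets at distance <= kappa are merged into the smallest droplet containing
   both.  Start from a unit droplet around every site of D ∩ A and merge as long as two
   droplets are within distance kappa: the resulting droplets are pairwise kappa-separated
   and have total size O(|D ∩ A|).  Their union is closed, so it contains [D ∩ A]; the
   strongly connected spanning set lies in a single one of them, which by minimality
   contains D. *)

From Stdlib Require Import Reals List Lra Lia ZArith Wf_nat Classical ClassicalEpsilon.
Import ListNotations.
Open Scope R_scope.

Lemma least_spec (P : nat -> Prop) : (exists n, P n) ->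
  exists m, least P = Some m /\ P m /\ forall k, P k -> (m <= k)%nat.
Proof.
  intro H. unfold least.
  destruct (excluded_middle_informative (exists n, P n)) as [H'|H']; [|contradiction].
  destruct (constructive_indefinite_description _ _) as [m [Pm Hm]]. simpl. eauto.
Qed.

Lemma least_zero (P : nat -> Prop) : P 0%nat -> least P = Some 0%nat.
Proof.
  intro H. destruct (least_spec P) as [m [E [_ Hm]]]; [eauto|].
  rewrite E. specialize (Hm _ H). f_equal; lia.
Qed.

Lemma omin_ole (x y : option nat) (k : nat) :
  omin x y = Some k -> ole (Some k) x /\ ole (Some k) y.
Proof.
  destruct x as [m|], y as [n|]; simpl; intro E; try discriminate;
    injection E as <-; auto; lia.
Qed.

Lemma ip_padd x y u : ip (padd x y) u = ip x u + ip y u.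
Proof. unfold ip, padd; simpl. rewrite !plus_IZR. ring. Qed.

Lemma ip_psub x y u : ip (psub x y) u = ip x u - ip y u.
Proof. unfold ip, psub; simpl. rewrite !minus_IZR. ring. Qed.

Lemma ip_vneg x u : ip x (vneg u) = - ip x u.
Proof. unfold ip, vneg; simpl. ring. Qed.

Lemma Hu_iff u a x : Hu u a x <-> ip x u < ip a u.
Proof. unfold Hu. rewrite ip_psub. lra. Qed.

Lemma unit_vec_vneg u : unit_vec u -> unit_vec (vneg u).
Proof.
  unfold unit_vec, vneg; simpl. intro H.
  transitivity (fst u ^ 2 + snd u ^ 2); [ring|exact H].
Qed.

Lemma rational_dir_vneg u : rational_dir u -> rational_dir (vneg u).
Proof.
  intros [Hu [p [q [lam [Hpq [Hl ->]]]]]]. split; [now apply unit_vec_vneg|].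
  exists (-p)%Z, (-q)%Z, lam. split; [lia|split; auto]. unfold vneg; simpl.
  rewrite !opp_IZR. f_equal; ring.
Qed.

Lemma Rabs_le_1_of_unit a b : a^2 + b^2 = 1 -> Rabs a <= 1.
Proof. intro H. apply Rabs_le. split; nra. Qed.

Lemma dist2_sym x y : dist2 x y = dist2 y x.
Proof. unfold dist2. f_equal. ring. Qed.

Lemma dist2_padd x y z : dist2 (padd x y) (padd x z) = dist2 y z.
Proof. unfold dist2, padd; simpl. rewrite !plus_IZR. f_equal. ring. Qed.

Lemma sqrt_sum_sqr_le a b : sqrt (a^2 + b^2) <= Rabs a + Rabs b.
Proof.
  pose proof (Rabs_pos a); pose proof (Rabs_pos b).
  rewrite <- (sqrt_Rsqr (Rabs a + Rabs b)) by lra.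
  apply sqrt_le_1_alt. pose proof (Rsqr_abs a); pose proof (Rsqr_abs b).
  unfold Rsqr in *. nra.
Qed.

Lemma Rabs_le_sqrt_sum_sqr a b : Rabs a <= sqrt (a^2 + b^2).
Proof. rewrite <- sqrt_Rsqr_abs. apply sqrt_le_1_alt. unfold Rsqr. nra. Qed.

Lemma Rabs_ip_sub_le_dist2 x y u : unit_vec u -> Rabs (ip x u - ip y u) <= dist2 x y.
Proof.
  unfold unit_vec, ip, dist2. destruct u as [u1 u2]; cbn [fst snd]. intro Hu.
  set (v1 := IZR (fst x) - IZR (fst y)). set (v2 := IZR (snd x) - IZR (snd y)).
  replace (_ - _) with (v1 * u1 + v2 * u2) by (unfold v1, v2; ring).
  rewrite <- sqrt_Rsqr_abs. apply sqrt_le_1_alt. unfold Rsqr.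
  assert (0 <= (v1 * u2 - v2 * u1)^2) by apply pow2_ge_0.
  replace (v1^2 + v2^2) with ((v1^2 + v2^2) * (u1^2 + u2^2)) by (rewrite Hu; ring).
  nra.
Qed.

(* Cramer's rule: the coordinates of x - y are recovered from its projections on u and v. *)
Lemma dist2_mul_det_le x y u v : unit_vec u -> unit_vec v ->
  dist2 x y * Rabs (det u v) <= 2 * (Rabs (ip x u - ip y u) + Rabs (ip x v - ip y v)).
Proof.
  destruct u as [u1 u2], v as [w1 w2]. unfold unit_vec, det, ip, dist2; cbn [fst snd].
  intros Hu Hv.
  set (v1 := IZR (fst x) - IZR (fst y)). set (v2 := IZR (snd x) - IZR (snd y)).
  set (a := v1 * u1 + v2 * u2). set (b := v1 * w1 + v2 * w2).
  replace (_ * u1 + _ - _) with a by (unfold a, v1, v2; ring).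
  replace (_ * w1 + _ - _) with b by (unfold b, v1, v2; ring).
  assert (Hu1 : Rabs u1 <= 1) by (apply (Rabs_le_1_of_unit u1 u2); lra).
  assert (Hu2 : Rabs u2 <= 1) by (apply (Rabs_le_1_of_unit u2 u1); lra).
  assert (Hw1 : Rabs w1 <= 1) by (apply (Rabs_le_1_of_unit w1 w2); lra).
  assert (Hw2 : Rabs w2 <= 1) by (apply (Rabs_le_1_of_unit w2 w1); lra).
  pose proof (Rabs_pos a); pose proof (Rabs_pos b).
  assert (E1 : Rabs v1 * Rabs (u1 * w2 - u2 * w1) <= Rabs a + Rabs b).
  { rewrite <- Rabs_mult. replace (v1 * _) with (a * w2 - b * u2) by (unfold a, b; ring).
    eapply Rle_trans; [apply Rabs_triang|]. rewrite Rabs_Ropp, !Rabs_mult.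
    pose proof (Rabs_pos w2); pose proof (Rabs_pos u2). nra. }
  assert (E2 : Rabs v2 * Rabs (u1 * w2 - u2 * w1) <= Rabs a + Rabs b).
  { rewrite <- Rabs_mult. replace (v2 * _) with (b * u1 - a * w1) by (unfold a, b; ring).
    eapply Rle_trans; [apply Rabs_triang|]. rewrite Rabs_Ropp, !Rabs_mult.
    pose proof (Rabs_pos w1); pose proof (Rabs_pos u1). nra. }
  pose proof (sqrt_sum_sqr_le v1 v2). pose proof (Rabs_pos (u1 * w2 - u2 * w1)).
  apply Rle_trans with ((Rabs v1 + Rabs v2) * Rabs (u1 * w2 - u2 * w1)); [|lra].
  apply Rmult_le_compat_r; auto.
Qed.

Lemma fold_Rmax_ge {A} (f : A -> R) l z : In z l -> f z <= fold_right Rmax 0 (map f l).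
Proof.
  induction l as [|w l IH]; simpl; [tauto|]. intros [->|H].
  - apply Rmax_l.
  - eapply Rle_trans; [apply IH; auto|apply Rmax_r].
Qed.

Lemma fold_Rmax_nonneg {A} (f : A -> R) l : 0 <= fold_right Rmax 0 (map f l).
Proof. induction l; simpl; [lra|]. eapply Rle_trans; [apply IHl|apply Rmax_r]. Qed.

Lemma nu_nonneg U : 0 <= nu U.
Proof. apply fold_Rmax_nonneg. Qed.

Lemma kappa_nonneg U : 0 <= kappa U.
Proof. unfold kappa. pose proof (nu_nonneg U). lra. Qed.

Lemma rule_dist2_le_kappa U X y z : In X U -> In y X -> In z X -> dist2 y z <= kappa U.
Proof.
  intros HX Hy Hz. unfold kappa. pose proof (nu_nonneg U).
  enough (dist2 y z <= nu U) by lra.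
  set (h := fun x : pt => fold_right Rmax 0 (map (fun w => dist2 x w) (origin :: X))).
  apply Rle_trans with (h y); [apply (fold_Rmax_ge (dist2 y)); right; auto|].
  apply Rle_trans with (fold_right Rmax 0 (map h (origin :: X)));
    [apply (fold_Rmax_ge h); right; auto|].
  exact (fold_Rmax_ge (fun X0 : list pt => fold_right Rmax 0
    (map (fun x => fold_right Rmax 0 (map (dist2 x) (origin :: X0))) (origin :: X0))) U X HX).
Qed.

Definition pt_eq_dec : forall x y : pt, {x = y} + {x <> y}.
Proof. decide equality; apply Z.eq_dec. Defined.

Definition Z_interval (a : Z) (N : nat) : list Z :=
  map (fun k => (a - Z.of_nat N + Z.of_nat k)%Z) (seq 0 (2 * N + 1)).

Lemma in_Z_interval a N z : (Z.abs (z - a) <= Z.of_nat N)%Z -> In z (Z_interval a N).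
Proof.
  intro H. apply in_map_iff. exists (Z.to_nat (z - a + Z.of_nat N)).
  split; [lia|]. apply in_seq. lia.
Qed.

Lemma enum_of_box (S : pt -> Prop) (p : pt) (N : nat) :
  (forall x, S x -> (Z.abs (fst x - fst p) <= Z.of_nat N)%Z /\
                   (Z.abs (snd x - snd p) <= Z.of_nat N)%Z) ->
  exists l, NoDup l /\ forall x, In x l <-> S x.
Proof.
  intro H.
  set (box := list_prod (Z_interval (fst p) N) (Z_interval (snd p) N)).
  set (f := fun x => if excluded_middle_informative (S x) then true else false).
  exists (nodup pt_eq_dec (filter f box)). split; [apply NoDup_nodup|].
  intro x. rewrite nodup_In, filter_In. unfold f.
  destruct (excluded_middle_informative (S x)) as [h|h]; split; try tauto.
  - intros _; split; auto. destruct x as [x1 x2], (H _ h) as [h1 h2].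
    apply in_prod; apply in_Z_interval; auto.
  - intros [_ E]; discriminate.
Qed.

Lemma enum_of_bounded (S : pt -> Prop) (p : pt) (R0 : R) :
  (forall x, S x -> dist2 x p <= R0) -> exists l, NoDup l /\ forall x, In x l <-> S x.
Proof.
  intro H. apply (enum_of_box S p (Z.to_nat (up R0))). intros x Hx.
  specialize (H x Hx). unfold dist2 in H. destruct (archimed R0) as [Hup _].
  pose proof (Rabs_le_sqrt_sum_sqr (IZR (fst x) - IZR (fst p)) (IZR (snd x) - IZR (snd p))).
  pose proof (Rabs_le_sqrt_sum_sqr (IZR (snd x) - IZR (snd p)) (IZR (fst x) - IZR (fst p))).
  rewrite <- !minus_IZR, <- !abs_IZR in *. rewrite Rplus_comm in H1.
  assert (Z.abs (fst x - fst p) < up R0)%Z by (apply lt_IZR; lra).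
  assert (Z.abs (snd x - snd p) < up R0)%Z by (apply lt_IZR; lra).
  split; lia.
Qed.

Lemma card_set_of_enum (S : pt -> Prop) l : NoDup l -> (forall x, In x l <-> S x) ->
  card_set S = Some (length l).
Proof.
  intros Hn Hl. unfold card_set.
  destruct (least_spec (fun k => exists l : list pt,
                NoDup l /\ length l = k /\ forall x, In x l <-> S x))
    as [m [E [[l' [Hn' [<- Hl']]] _]]]; [eauto|].
  rewrite E. f_equal.
  apply Nat.le_antisymm; apply NoDup_incl_length; auto; intros x Hx;
    [apply Hl, Hl'|apply Hl', Hl]; auto.
Qed.

(** * Stable directions *)

Definition stable_dir (U : update_family) (u : vec) : Prop :=
  forall X, In X U -> exists y, In y X /\ 0 <= ip y u.

Lemma stable_rule_closed U u t x X : stable_dir U u -> In X U ->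
  (forall y, In y X -> ip (padd x y) u < t) -> ip x u < t.
Proof.
  intros Hu HX H. destruct (Hu X HX) as [y [Hy Hy']].
  specialize (H y Hy). rewrite ip_padd in H. lra.
Qed.

Definition l1_bound (l : list pt) : Z :=
  fold_right (fun z acc => Z.abs (fst z) + Z.abs (snd z) + acc)%Z 0%Z l.

Lemma l1_bound_spec l : (0 <= l1_bound l)%Z /\
  forall z, In z l -> (Z.abs (fst z) + Z.abs (snd z) <= l1_bound l)%Z.
Proof.
  induction l as [|w l [IH0 IH]]; simpl; split; try lia.
  intros z [->|H]; [lia|]. specialize (IH z H). lia.
Qed.

Definition line_site (p q k : Z) : pt := ((k * q)%Z, (- (k * p))%Z).

Lemma line_site_notin p q k l : (p <> 0 \/ q <> 0)%Z -> (l1_bound l < Z.abs k)%Z ->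
  ~ In (line_site p q k) l.
Proof.
  intros Hpq Hk Hin. destruct (l1_bound_spec l) as [_ H]. specialize (H _ Hin).
  simpl in H. rewrite Z.abs_opp, !Z.abs_mul in H. nia.
Qed.

Lemma ip_line_site p q k lam :
  ip (line_site p q k) (lam * IZR p, lam * IZR q) = 0 /\
  ip (line_site p q k) (snd (lam * IZR p, lam * IZR q), - fst (lam * IZR p, lam * IZR q))
    = IZR k * lam * (IZR p ^ 2 + IZR q ^ 2).
Proof. unfold ip, line_site; simpl. rewrite opp_IZR, !mult_IZR. split; ring. Qed.

Lemma ell_sides_infinite u : rational_dir u ->
  infinite_set (ell_plus u) /\ infinite_set (ell_minus u).
Proof.
  intros [_ [p [q [lam [Hpq [Hlam ->]]]]]].
  assert (Hpq2 : 0 <= IZR p ^ 2 + IZR q ^ 2) by nra.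
  split; intro l; destruct (l1_bound_spec l) as [Hl _];
    [set (k := (l1_bound l + 1)%Z)|set (k := (- (l1_bound l + 1))%Z)];
    exists (line_site p q k); destruct (ip_line_site p q k lam) as [E0 E1];
    (split; [|apply line_site_notin; unfold k; lia]);
    unfold ell_plus, ell_minus; rewrite E1; split; auto.
  - assert (0 <= IZR k) by (apply IZR_le; unfold k; lia).
    apply Rle_ge, Rmult_le_pos; [apply Rmult_le_pos|]; lra.
  - assert (0 <= - IZR k) by (rewrite <- opp_IZR; apply IZR_le; unfold k; lia).
    enough (0 <= - IZR k * lam * (IZR p ^ 2 + IZR q ^ 2)) by lra.
    apply Rmult_le_pos; [apply Rmult_le_pos|]; lra.
Qed.

(* A rule inside the open half-plane H_u fills the whole line <x,u> = 0 in one step. *)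
Lemma alpha_side_unstable U (ell : pt -> Prop) u :
  (forall x, ell x -> ip x u = 0) -> infinite_set ell -> ~ stable_dir U u ->
  alpha_side U ell u = Some 0%nat.
Proof.
  intros Hline Hinf Hunst. apply least_zero.
  assert (HX : exists X, In X U /\ forall y, In y X -> ip y u < 0).
  { apply NNPP. intro H. apply Hunst. intros X HX. apply NNPP. intro Hno.
    apply H. exists X. split; auto. intros y Hy. apply Rnot_le_lt. eauto. }
  destruct HX as [X [HX HXu]].
  exists []. split; [constructor|split; [reflexivity|]]. intro l.
  destruct (Hinf l) as [x [Hx Hxl]]. exists x. split; [split; auto|auto].
  exists 1%nat. simpl. right. exists X. split; auto.
  intros y Hy. left. apply Hu_iff. rewrite ip_padd, Hline by auto.
  unfold ip at 2, origin; simpl. specialize (HXu y Hy). lra.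
Qed.

Lemma alpha_unstable U u : rational_dir u -> ~ stable_dir U u ->
  alpha_dir U u = Some 0%nat /\ alpha_bar U u = Some 0%nat.
Proof.
  intros Hr Hunst. destruct (ell_sides_infinite u Hr) as [Hp Hm].
  unfold alpha_dir, alpha_bar, alpha_plus, alpha_minus.
  rewrite !alpha_side_unstable; auto; intros x [Hx _]; exact Hx.
Qed.

Lemma stable_of_alpha_dir U u k : rational_dir u -> (1 <= k)%nat ->
  ole (Some k) (alpha_dir U u) -> stable_dir U u.
Proof.
  intros Hr Hk H. apply NNPP. intro Hunst.
  rewrite (proj1 (alpha_unstable U u Hr Hunst)) in H. simpl in H. lia.
Qed.

Lemma stable_of_alpha_bar U u k : rational_dir u -> (1 <= k)%nat ->
  ole (Some k) (alpha_bar U u) -> stable_dir U u.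
Proof.
  intros Hr Hk H. apply NNPP. intro Hunst.
  rewrite (proj2 (alpha_unstable U u Hr Hunst)) in H. simpl in H. lia.
Qed.

(** * A positive linear relation between the directions of S_U *)

Lemma parallel_to_unit s1 s2 v1 v2 : s1^2 + s2^2 = 1 -> s1 * v2 - s2 * v1 = 0 ->
  v1 = (v1 * s1 + v2 * s2) * s1 /\ v2 = (v1 * s1 + v2 * s2) * s2.
Proof.
  intros Hs Hd. split.
  - transitivity (v1 * (s1^2 + s2^2) + s2 * (s1 * v2 - s2 * v1)); [rewrite Hs, Hd; ring|ring].
  - transitivity (v2 * (s1^2 + s2^2) - s1 * (s1 * v2 - s2 * v1)); [rewrite Hs, Hd; ring|ring].
Qed.

Lemma positive_relation (us ul ur : vec) : unit_vec us -> det us ul * det us ur < 0 ->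
  exists c1 c2 c3 c4, 0 < c1 /\ 0 < c2 /\ 0 < c3 /\ 0 < c4 /\
    forall x : pt, c1 * ip x us + c2 * ip x (vneg us) + c3 * ip x ul + c4 * ip x ur = 0.
Proof.
  destruct us as [s1 s2], ul as [l1 l2], ur as [r1 r2].
  unfold unit_vec, det, vneg, ip; simpl. intros Hs Hd.
  set (bl := s1 * l2 - s2 * l1) in *. set (br := s1 * r2 - s2 * r1) in *.
  (* weights |br|, |bl| cancel the components of ul and ur orthogonal to us *)
  set (v1 := Rabs br * l1 + Rabs bl * r1). set (v2 := Rabs br * l2 + Rabs bl * r2).
  assert (Hv : s1 * v2 - s2 * v1 = 0).
  { replace (s1 * v2 - s2 * v1) with (Rabs br * bl + Rabs bl * br)
      by (unfold v1, v2, bl, br; ring).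
    assert (bl <> 0) by (intro E; rewrite E in Hd; lra).
    destruct (Rlt_le_dec 0 bl).
    - rewrite (Rabs_left br), (Rabs_right bl) by nra. ring.
    - assert (bl < 0) by lra.
      rewrite (Rabs_left bl), (Rabs_right br) by nra. ring. }
  destruct (parallel_to_unit s1 s2 v1 v2 Hs Hv) as [E1 E2].
  set (m := v1 * s1 + v2 * s2) in *.
  pose proof (Rle_abs m). pose proof (Rabs_pos m).
  exists (1 + Rabs m - m), (1 + Rabs m), (Rabs br), (Rabs bl).
  repeat split; try lra; try (apply Rabs_pos_lt; intro E; rewrite E in Hd; lra).
  intro x. transitivity (IZR (fst x) * (v1 - m * s1) + IZR (snd x) * (v2 - m * s2));
    [unfold v1, v2; ring|rewrite <- E1, <- E2; ring].
Qed.

Definition pos_site (u : vec) : pt :=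
  if Rlt_dec 0 (fst u) then (1%Z, 0%Z)
  else if Rlt_dec (fst u) 0 then ((-1)%Z, 0%Z)
  else if Rlt_dec 0 (snd u) then (0%Z, 1%Z) else (0%Z, (-1)%Z).

Lemma ip_pos_site u : unit_vec u -> 0 < ip (pos_site u) u.
Proof.
  destruct u as [u1 u2]. unfold unit_vec, pos_site, ip; simpl. intro H.
  destruct (Rlt_dec 0 u1); [simpl; lra|].
  destruct (Rlt_dec u1 0); [simpl; lra|].
  destruct (Rlt_dec 0 u2); simpl; [lra|]. assert (u1 = 0) by lra. subst. nra.
Qed.

Lemma four_term_abs_lt k1 k2 k3 k4 a1 a2 a3 a4 s1 s2 s3 s4 :
  0 < k1 -> 0 < k2 -> 0 < k3 -> 0 < k4 ->
  0 < s1 -> 0 < s2 -> 0 < s3 -> 0 < s4 ->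
  a1 < s1 -> a2 < s2 -> a3 < s3 -> a4 < s4 ->
  k1 * a1 + k2 * a2 + k3 * a3 + k4 * a4 = 0 ->
  k1 * Rabs a1 < k1 * s1 + k2 * s2 + k3 * s3 + k4 * s4.
Proof.
  intros. assert (k2 * a2 < k2 * s2) by (apply Rmult_lt_compat_l; auto).
  assert (k3 * a3 < k3 * s3) by (apply Rmult_lt_compat_l; auto).
  assert (k4 * a4 < k4 * s4) by (apply Rmult_lt_compat_l; auto).
  assert (k1 * a1 < k1 * s1) by (apply Rmult_lt_compat_l; auto).
  assert (0 < k1 * s1 /\ 0 < k2 * s2 /\ 0 < k3 * s3 /\ 0 < k4 * s4)
    by (repeat split; apply Rmult_lt_0_compat; auto).
  unfold Rabs. destruct (Rcase_abs a1); lra.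
Qed.

Lemma Rmax_le_add t t' px py : px < t -> py < t' ->
  Rmax t t' <= t + t' - px + Rabs (px - py).
Proof.
  intros. pose proof (Rle_abs (px - py)). pose proof (Rabs_pos (px - py)).
  unfold Rmax. destruct (Rle_dec t t'); lra.
Qed.

(** * Droplets with four given normals *)

Section Droplets.

Variables u1 u2 u3 u4 : vec.
Hypotheses (u1_unit : unit_vec u1) (u2_unit : unit_vec u2)
  (u3_unit : unit_vec u3) (u4_unit : unit_vec u4).
Variables c1 c2 c3 c4 : R.
Hypotheses (c1_pos : 0 < c1) (c2_pos : 0 < c2) (c3_pos : 0 < c3) (c4_pos : 0 < c4).
Hypothesis weighted_ip_sum :
  forall x : pt, c1 * ip x u1 + c2 * ip x u2 + c3 * ip x u3 + c4 * ip x u4 = 0.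
Hypothesis det13_neq0 : det u1 u3 <> 0.

Record droplet := Droplet { anchor1 : pt; anchor2 : pt; anchor3 : pt; anchor4 : pt }.

Definition in_droplet (d : droplet) (x : pt) : Prop :=
  ip x u1 < ip (anchor1 d) u1 /\ ip x u2 < ip (anchor2 d) u2 /\
  ip x u3 < ip (anchor3 d) u3 /\ ip x u4 < ip (anchor4 d) u4.

Definition wsum (t1 t2 t3 t4 : R) : R := c1 * t1 + c2 * t2 + c3 * t3 + c4 * t4.

Lemma wsum_lt t1 t2 t3 t4 s1 s2 s3 s4 :
  t1 < s1 -> t2 < s2 -> t3 < s3 -> t4 < s4 -> wsum t1 t2 t3 t4 < wsum s1 s2 s3 s4.
Proof.
  intros. unfold wsum.
  assert (c1 * t1 < c1 * s1) by (apply Rmult_lt_compat_l; auto).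
  assert (c2 * t2 < c2 * s2) by (apply Rmult_lt_compat_l; auto).
  assert (c3 * t3 < c3 * s3) by (apply Rmult_lt_compat_l; auto).
  assert (c4 * t4 < c4 * s4) by (apply Rmult_lt_compat_l; auto). lra.
Qed.

Lemma wsum_le t1 t2 t3 t4 s1 s2 s3 s4 :
  t1 <= s1 -> t2 <= s2 -> t3 <= s3 -> t4 <= s4 -> wsum t1 t2 t3 t4 <= wsum s1 s2 s3 s4.
Proof.
  intros. unfold wsum.
  assert (c1 * t1 <= c1 * s1) by (apply Rmult_le_compat_l; lra).
  assert (c2 * t2 <= c2 * s2) by (apply Rmult_le_compat_l; lra).
  assert (c3 * t3 <= c3 * s3) by (apply Rmult_le_compat_l; lra).
  assert (c4 * t4 <= c4 * s4) by (apply Rmult_le_compat_l; lra). lra.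
Qed.

Definition dsize (d : droplet) : R :=
  wsum (ip (anchor1 d) u1) (ip (anchor2 d) u2) (ip (anchor3 d) u3) (ip (anchor4 d) u4).

Lemma dsize_pos d x : in_droplet d x -> 0 < dsize d.
Proof.
  intros (h1 & h2 & h3 & h4). pose proof (weighted_ip_sum x).
  pose proof (wsum_lt _ _ _ _ _ _ _ _ h1 h2 h3 h4).
  unfold dsize, wsum in *. lra.
Qed.

Definition diam_const : R := 2 * (/ c1 + / c3) / Rabs (det u1 u3).

Lemma diam_const_pos : 0 < diam_const.
Proof.
  apply Rdiv_lt_0_compat; [|now apply Rabs_pos_lt].
  pose proof (Rinv_0_lt_compat c1 c1_pos). pose proof (Rinv_0_lt_compat c3 c3_pos). lra.
Qed.

Lemma in_droplet_dist2_le d x y :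
  in_droplet d x -> in_droplet d y -> dist2 x y <= diam_const * dsize d.
Proof.
  intros (x1 & x2 & x3 & x4) (y1 & y2 & y3 & y4).
  pose proof (weighted_ip_sum x) as Sx. pose proof (weighted_ip_sum y) as Sy.
  assert (Hsize : dsize d = c1 * (ip (anchor1 d) u1 - ip y u1) + c2 * (ip (anchor2 d) u2 - ip y u2)
               + c3 * (ip (anchor3 d) u3 - ip y u3) + c4 * (ip (anchor4 d) u4 - ip y u4)).
  { unfold dsize, wsum. lra. }
  assert (gap1 : c1 * Rabs (ip x u1 - ip y u1) < dsize d).
  { rewrite Hsize. apply four_term_abs_lt with (a2 := ip x u2 - ip y u2)
      (a3 := ip x u3 - ip y u3) (a4 := ip x u4 - ip y u4); auto; lra. }
  assert (gap3 : c3 * Rabs (ip x u3 - ip y u3) < dsize d).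
  { replace (dsize d) with (c3 * (ip (anchor3 d) u3 - ip y u3) + c1 * (ip (anchor1 d) u1 - ip y u1)
               + c2 * (ip (anchor2 d) u2 - ip y u2) + c4 * (ip (anchor4 d) u4 - ip y u4)) by lra.
    apply four_term_abs_lt with (a2 := ip x u1 - ip y u1)
      (a3 := ip x u2 - ip y u2) (a4 := ip x u4 - ip y u4); auto; lra. }
  assert (Hdet : 0 < Rabs (det u1 u3)) by (apply Rabs_pos_lt; auto).
  pose proof (dist2_mul_det_le x y u1 u3 u1_unit u3_unit).
  apply Rmult_le_reg_r with (Rabs (det u1 u3)); auto.
  apply Rle_trans with (2 * (Rabs (ip x u1 - ip y u1) + Rabs (ip x u3 - ip y u3))); auto.
  replace (diam_const * dsize d * Rabs (det u1 u3))
    with (2 * ((c1 * (/ c1 * dsize d)) / c1 + (c3 * (/ c3 * dsize d)) / c3))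
    by (unfold diam_const; field; lra).
  rewrite <- !Rmult_assoc, !Rinv_r, !Rmult_1_l by lra.
  apply Rmult_le_compat_l; [lra|]. apply Rplus_le_compat.
  - apply Rmult_le_reg_l with c1; auto. field_simplify; lra.
  - apply Rmult_le_reg_l with c3; auto. field_simplify; lra.
Qed.

Definition farther (u : vec) (a b : pt) : pt := if Rle_dec (ip a u) (ip b u) then b else a.

Lemma ip_farther u a b : ip (farther u a b) u = Rmax (ip a u) (ip b u).
Proof. unfold farther, Rmax. destruct (Rle_dec (ip a u) (ip b u)); auto. Qed.

Definition merge (d d' : droplet) : droplet :=
  Droplet (farther u1 (anchor1 d) (anchor1 d')) (farther u2 (anchor2 d) (anchor2 d'))
          (farther u3 (anchor3 d) (anchor3 d')) (farther u4 (anchor4 d) (anchor4 d')).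

Lemma in_droplet_merge d d' x : in_droplet d x \/ in_droplet d' x -> in_droplet (merge d d') x.
Proof.
  unfold in_droplet, merge; simpl. rewrite !ip_farther.
  intros [(h1 & h2 & h3 & h4)|(h1 & h2 & h3 & h4)]; repeat split;
    (eapply Rlt_le_trans; [eassumption|]); first [apply Rmax_l|apply Rmax_r].
Qed.

Definition csum : R := c1 + c2 + c3 + c4.

Lemma dsize_merge_le d d' x y : in_droplet d x -> in_droplet d' y ->
  dsize (merge d d') <= dsize d + dsize d' + csum * dist2 x y.
Proof.
  intros (x1 & x2 & x3 & x4) (y1 & y2 & y3 & y4). unfold dsize, merge; simpl.
  rewrite !ip_farther.
  eapply Rle_trans; [apply wsum_le; (eapply Rle_trans;
    [apply Rmax_le_add; eassumption|apply Rplus_le_compat_l, Rabs_ip_sub_le_dist2; auto])|].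
  pose proof (weighted_ip_sum x). unfold wsum, csum. lra.
Qed.

Definition unit_droplet (z : pt) : droplet :=
  Droplet (padd z (pos_site u1)) (padd z (pos_site u2))
          (padd z (pos_site u3)) (padd z (pos_site u4)).

Definition unit_dsize : R :=
  wsum (ip (pos_site u1) u1) (ip (pos_site u2) u2) (ip (pos_site u3) u3) (ip (pos_site u4) u4).

Lemma in_unit_droplet z : in_droplet (unit_droplet z) z.
Proof.
  unfold in_droplet, unit_droplet; simpl. rewrite !ip_padd.
  pose proof (ip_pos_site u1 u1_unit). pose proof (ip_pos_site u2 u2_unit).
  pose proof (ip_pos_site u3 u3_unit). pose proof (ip_pos_site u4 u4_unit).
  repeat split; lra.
Qed.

Lemma dsize_unit_droplet z : dsize (unit_droplet z) = unit_dsize.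
Proof.
  unfold dsize, unit_droplet, unit_dsize, wsum; simpl. rewrite !ip_padd.
  pose proof (weighted_ip_sum z). lra.
Qed.

Lemma unit_dsize_pos : 0 < unit_dsize.
Proof. rewrite <- (dsize_unit_droplet origin). exact (dsize_pos _ _ (in_unit_droplet _)). Qed.

(** * Separated covers by droplets *)

Section Cover.

Variable r : R.
Hypothesis r_nonneg : 0 <= r.

Definition far (d d' : droplet) : Prop :=
  forall x y, in_droplet d x -> in_droplet d' y -> r < dist2 x y.

Definition separated (F : list droplet) : Prop :=
  forall d d', In d F -> In d' F -> d = d' \/ far d d'.

Definition in_cover (F : list droplet) (x : pt) : Prop := exists d, In d F /\ in_droplet d x.

Definition nonempty_droplets (F : list droplet) : Prop :=
  forall d, In d F -> exists x, in_droplet d x.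

Definition cover_cost (F : list droplet) : R :=
  fold_right (fun d acc => dsize d + csum * r + acc) 0 F.

Lemma csum_r_nonneg : 0 <= csum * r.
Proof. apply Rmult_le_pos; [unfold csum; lra|auto]. Qed.

Lemma cover_cost_app F1 F2 : cover_cost (F1 ++ F2) = cover_cost F1 + cover_cost F2.
Proof. induction F1; simpl; [ring|]. rewrite IHF1. ring. Qed.

Lemma cover_cost_nonneg F : nonempty_droplets F -> 0 <= cover_cost F.
Proof.
  induction F as [|d F IH]; simpl; intro Hne; [lra|].
  destruct (Hne d (or_introl eq_refl)) as [x hx]. pose proof (dsize_pos d x hx).
  pose proof csum_r_nonneg.
  enough (0 <= cover_cost F) by lra. apply IH. intros d' h. apply Hne. now right.
Qed.

Lemma dsize_le_cover_cost F d : nonempty_droplets F -> In d F -> dsize d <= cover_cost F.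
Proof.
  induction F as [|a F IH]; simpl; [tauto|]. intros Hne Hd. pose proof csum_r_nonneg.
  assert (HF : nonempty_droplets F) by (intros d' h; apply Hne; now right).
  destruct Hd as [<-|Hd].
  - pose proof (cover_cost_nonneg F HF). lra.
  - destruct (Hne a (or_introl eq_refl)) as [x hx]. pose proof (dsize_pos a x hx).
    pose proof (IH HF Hd). lra.
Qed.

Lemma separated_close F d d' x y : separated F -> In d F -> In d' F ->
  in_droplet d x -> in_droplet d' y -> dist2 x y <= r -> in_droplet d y.
Proof.
  intros Hs Hd Hd' hx hy hxy. destruct (Hs d d' Hd Hd') as [<-|Hf]; auto.
  specialize (Hf x y hx hy). lra.
Qed.

Lemma separated_cons E F : separated F -> (forall d, In d F -> far E d) -> separated (E :: F).
Proof.
  intros Hs Hfar d d' [<-|Hd] [<-|Hd']; auto.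
  right. intros x y hx hy. rewrite dist2_sym. exact (Hfar d Hd y x hy hx).
Qed.

(* Insert a droplet E, merging it repeatedly with any droplet at distance <= r. *)
Lemma cover_insert F : forall E, separated F -> nonempty_droplets F ->
  (exists x, in_droplet E x) ->
  exists F', separated F' /\ nonempty_droplets F' /\
    (forall x, in_droplet E x \/ in_cover F x -> in_cover F' x) /\
    cover_cost F' <= cover_cost F + dsize E + csum * r.
Proof.
  induction F as [F IH] using (well_founded_ind (well_founded_ltof _ (@length droplet))).
  intros E Hs Hne HE.
  destruct (classic (exists d, In d F /\ ~ far E d)) as [[d [Hd Hclose]]|Hfar].
  - destruct (In_split _ _ Hd) as [F1 [F2 ->]].
    assert (Hxy : exists x y, in_droplet E x /\ in_droplet d y /\ dist2 x y <= r).
    { apply NNPP. intro H. apply Hclose. intros x y hx hy. apply Rnot_le_lt.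
      intro. apply H. eauto. }
    destruct Hxy as [x [y [hx [hy hxy]]]].
    assert (Hincl : incl (F1 ++ F2) (F1 ++ d :: F2))
      by (intros z; rewrite !in_app_iff; simpl; tauto).
    destruct (IH (F1 ++ F2) ltac:(unfold ltof; rewrite !length_app; simpl; lia) (merge E d))
      as [F' (H1 & H2 & H3 & H4)].
    { intros d1 d2 h1 h2. apply Hs; auto. }
    { intros d' h. apply Hne; auto. }
    { exists x. apply in_droplet_merge; auto. }
    exists F'. repeat split; auto.
    + intros z [hz|[d' [Hd' hz]]]; apply H3; [left; apply in_droplet_merge; auto|].
      apply in_app_iff in Hd'. destruct Hd' as [Hd'|[<-|Hd']].
      * right. exists d'. rewrite in_app_iff. auto.
      * left. apply in_droplet_merge; auto.
      * right. exists d'. rewrite in_app_iff. auto.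
    + pose proof (dsize_merge_le E d x y hx hy).
      pose proof (Rmult_le_compat_l csum _ _ ltac:(unfold csum; lra) hxy).
      rewrite cover_cost_app in *. simpl. lra.
  - exists (E :: F). repeat split.
    + apply separated_cons; auto. intros d Hd. apply NNPP. eauto.
    + intros d [<-|Hd]; auto.
    + intros x [h|[d [Hd h]]]; [exists E|exists d]; simpl; auto.
    + simpl. lra.
Qed.

Lemma cover_of_sites (S : list pt) : exists F, separated F /\ nonempty_droplets F /\
  (forall z, In z S -> in_cover F z) /\ cover_cost F <= (unit_dsize + csum * r) * INR (length S).
Proof.
  induction S as [|z S [F (H1 & H2 & H3 & H4)]].
  - exists []. repeat split; try (intros ? ? []); try (intros ? []).
    simpl. lra.
  - destruct (cover_insert F (unit_droplet z) H1 H2) as [F' (G1 & G2 & G3 & G4)].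
    { exists z. apply in_unit_droplet. }
    exists F'. repeat split; auto.
    + intros w [<-|hw]; apply G3; [left; apply in_unit_droplet|right; auto].
    + rewrite dsize_unit_droplet in G4. simpl length. rewrite S_INR. lra.
Qed.

End Cover.

(** * Droplets under the bootstrap dynamics *)

Variable U : update_family.
Hypotheses (u1_stable : stable_dir U u1) (u2_stable : stable_dir U u2)
  (u3_stable : stable_dir U u3) (u4_stable : stable_dir U u4).

Lemma in_droplet_rule_closed d x X : In X U ->
  (forall y, In y X -> in_droplet d (padd x y)) -> in_droplet d x.
Proof.
  intros HX H. unfold in_droplet.
  repeat split; eapply stable_rule_closed; eauto; intros y Hy; apply H in Hy;
    unfold in_droplet in Hy; tauto.
Qed.

Lemma closure_in_cover F (S : pt -> Prop) : separated (kappa U) F ->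
  (forall z, S z -> in_cover F z) -> forall x, closure U S x -> in_cover F x.
Proof.
  intros Hs HS x [t Ht]. revert x Ht. induction t as [|t IH]; simpl; intros x Ht; auto.
  destruct Ht as [Ht|[X [HX HXy]]]; auto.
  destruct (u1_stable X HX) as [y0 [Hy0 _]].
  destruct (IH _ (HXy y0 Hy0)) as [d0 [Hd0 h0]].
  exists d0. split; auto. apply (in_droplet_rule_closed d0 x X HX).
  (* the sites x + X are within distance kappa, hence in the same droplet of the cover *)
  intros y Hy. destruct (IH _ (HXy y Hy)) as [d [Hd h]].
  apply (separated_close (kappa U) F d0 d (padd x y0)); auto.
  rewrite dist2_padd. eapply rule_dist2_le_kappa; eauto.
Qed.

Lemma kpath_in_droplet F (L : pt -> Prop) d : separated (kappa U) F ->
  (forall z, L z -> in_cover F z) -> In d F ->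
  forall p x y, in_droplet d x -> kpath U L x p y -> in_droplet d y.
Proof.
  intros Hs HL Hd p. induction p as [|z p IH]; simpl; intros x y hx Hp.
  - now subst.
  - destruct Hp as [Lz [hz Hp]]. apply (IH z); auto.
    destruct (HL z Lz) as [d' [Hd' h']]. eapply (separated_close (kappa U) F d d'); eauto.
Qed.

Hypothesis u2_opp : u2 = vneg u1.

Lemma is_droplet_in_droplet D : is_droplet u1 u3 u4 D ->
  exists d, forall x, D x <-> in_droplet d x.
Proof.
  intros [[a1 [a2 [a3 [a4 Hrep]]]] _]. exists (Droplet a1 a2 a3 a4). intro x.
  rewrite Hrep. unfold in_droplet; simpl. rewrite u2_opp, !Hu_iff. tauto.
Qed.

Lemma in_droplet_is_droplet d : (exists x, in_droplet d x) ->
  is_droplet u1 u3 u4 (in_droplet d).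
Proof.
  intro H. split; auto. exists (anchor1 d), (anchor2 d), (anchor3 d), (anchor4 d).
  intro x. unfold in_droplet. rewrite u2_opp, !Hu_iff. tauto.
Qed.

Lemma spanned_in_cover_droplet A D F : internally_spanned U u1 u3 u4 A D ->
  separated (kappa U) F -> (forall z, D z /\ A z -> in_cover F z) ->
  exists d, In d F /\ forall x, D x -> in_droplet d x.
Proof.
  intros (L & HLcl & Hsc & [_ [p Hp]] & HLD & Hmin) Hs HF.
  assert (HL : forall z, L z -> in_cover F z)
    by (intros z hz; exact (closure_in_cover F _ Hs HF z (HLcl z hz))).
  destruct (classic (exists l0, L l0)) as [[l0 Hl0]|Hno].
  2:{ (* an empty L would force D into a unit droplet avoiding one of its sites *)
      set (q := psub p (pos_site u1)).
      assert (Hq : is_droplet u1 u3 u4 (in_droplet (unit_droplet q)))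
        by (apply in_droplet_is_droplet; exists q; apply in_unit_droplet).
      destruct (Hmin _ Hq (fun x hx => False_ind _ (Hno (ex_intro _ x hx))) p Hp) as [h _].
      unfold unit_droplet, q in h; simpl in h. rewrite ip_padd, ip_psub in h. lra. }
  destruct (HL l0 Hl0) as [d [Hd hd]]. exists d. split; auto.
  apply Hmin; [apply in_droplet_is_droplet; eauto|].
  intros z hz. destruct (Hsc l0 z Hl0 hz) as [pth Hp']. eapply kpath_in_droplet; eauto.
Qed.

Lemma spanned_sites_enum A D : internally_spanned U u1 u3 u4 A D ->
  exists l, NoDup l /\ forall x, In x l <-> D x /\ A x.
Proof.
  intros (_ & _ & _ & [HD [p Hp]] & _).
  destruct (is_droplet_in_droplet D (conj HD (ex_intro _ p Hp))) as [d Hd].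
  apply (enum_of_bounded _ p (diam_const * dsize d)). intros x [Hx _].
  apply in_droplet_dist2_le; apply Hd; auto.
Qed.

Theorem spanned_card_ge_diam : exists c : R, 0 < c /\
  forall (A D : pt -> Prop), internally_spanned U u1 u3 u4 A D ->
    exists n : nat, card_set (fun x => D x /\ A x) = Some n /\
      forall x y, D x -> D y -> c * dist2 x y <= INR n.
Proof.
  set (K := diam_const * (unit_dsize + csum * kappa U)).
  pose proof diam_const_pos.
  assert (HK : 0 < K).
  { pose proof unit_dsize_pos. pose proof (csum_r_nonneg _ (kappa_nonneg U)).
    apply Rmult_lt_0_compat; lra. }
  exists (/ K). split; [now apply Rinv_0_lt_compat|]. intros A D HS.
  destruct (spanned_sites_enum A D HS) as [l [Hnd Hl]].
  exists (length l). split; [now apply card_set_of_enum|].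
  destruct (cover_of_sites (kappa U) l) as [F (G1 & G2 & G3 & G4)].
  destruct (spanned_in_cover_droplet A D F HS G1) as [d [Hd HDd]];
    [intros z hz; apply G3, Hl, hz|].
  pose proof (dsize_le_cover_cost _ (kappa_nonneg U) F d G2 Hd).
  intros x y hx hy. apply Rmult_le_reg_l with K; auto.
  rewrite <- Rmult_assoc, Rinv_r, Rmult_1_l by lra.
  eapply Rle_trans; [apply in_droplet_dist2_le; apply HDd; eauto|].
  unfold K. rewrite Rmult_assoc. apply Rmult_le_compat_l; lra.
Qed.

End Droplets.

Theorem mainTheorem10 :
  forall (U : update_family) (a : nat) (us ul ur : vec),
    is_update_family U ->
    unbalanced_critical U ->
    alpha_U U = Some a ->
    good_SU U a us ul ur ->
    exists c : R, 0 < c /\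
      forall (A D : pt -> Prop),
        internally_spanned U us ul ur A D ->
        exists n : nat, card_set (fun x => D x /\ A x) = Some n /\
          (* |D ∩ A| >= c * diam(D) *)
          forall x y, D x -> D y -> c * dist2 x y <= INR n.
Proof.
  intros U a us ul ur _ [a' [Ha' [Ha1 _]]] Ha (Rs & Rl & Rr & Hdet & Hs1 & Hs2 & Hlr).
  rewrite Ha in Ha'. injection Ha' as <-.
  pose proof (rational_dir_vneg us Rs) as Rvs.
  destruct (omin_ole _ _ _ Hlr) as [Hl Hr].
  destruct (positive_relation us ul ur (proj1 Rs) Hdet)
    as (c1 & c2 & c3 & c4 & h1 & h2 & h3 & h4 & hrel).
  apply (spanned_card_ge_diam us (vneg us) ul ur (proj1 Rs) (proj1 Rvs) (proj1 Rl) (proj1 Rr)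
           c1 c2 c3 c4 h1 h2 h3 h4 hrel).
  - intro E. rewrite E in Hdet. lra.
  - apply (stable_of_alpha_dir U us (a + 1)); auto; lia.
  - apply (stable_of_alpha_dir U (vneg us) (a + 1)); auto; lia.
  - exact (stable_of_alpha_bar U ul a Rl Ha1 Hl).
  - exact (stable_of_alpha_bar U ur a Rr Ha1 Hr).
  - reflexivity.
Qed.
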